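(* There exist absolute constants $C,c>0$ such that the following holds. Let $G=\mathrm{SL}(2,q)$ and let $D=(D_1,D_2)$ be a distribution on $G^2$ such that $D_1$ and $D_2$ are each uniform on $G$. Then with probability at least $1-C/q$ over $(g,h)$ sampled from $D$: (1) for every conjugacy class $S$ of $G$, $\Pr[g\,\mathbf C(h)\in S]\le C/q$; and (2) the distribution of $\mathbf C(g)\mathbf C(h)$ is within statistical distance $Cq^{-c}$ of the uniform distribution on $G$.
   Context: For $x\in G$, $\mathbf C(x)$ denotes $u^{-1}xu$ with $u$ uniform in $G$; distinct occurrences use independent $u$. Statistical distance is half the $\ell_1$ distance. $\mathrm{SL}(2,q)$ is the group of $2\times2$ determinant-one matrices over $\mathbb F_q$. *)

From HB Require Import structures.
From mathcomp Require Import all_boot all_order all_algebra all_fingroup.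
Set Implicit Arguments. Unset Strict Implicit. Unset Printing Implicit Defensive.
Import Order.TTheory GRing.Theory Num.Theory.

Local Open Scope group_scope.

Definition SL2 (F : finFieldType) : {set {'GL_2[F]}} :=
  [set x : {'GL_2[F]} | (\det (GLval x) == 1)%R].

Section Probs.
Variables (F : finFieldType) (R : realFieldType).
Local Notation gT := {'GL_2[F]}.
Local Notation G := (SL2 F).

(* D is a probability distribution on gT * gT whose two marginals are
   uniform on G (hence D is supported on G x G). *)
Definition is_distr (D : gT * gT -> R) : Prop :=
  (forall p, (0 <= D p)%R) /\ (\sum_p D p = 1)%R.
Definition marginals_uniform (D : gT * gT -> R) : Prop :=
  (forall x, \sum_y D (x, y) = (x \in G)%:R / #|G|%:R)%R /\
  (forall y, \sum_x D (x, y) = (y \in G)%:R / #|G|%:R)%R.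

Definition probC (g h : gT) (S : {set gT}) : R :=
  (#|[set u in G | (g * h ^ u)%g \in S]|%:R / #|G|%:R)%R.

Definition CCprob (g h z : gT) : R :=
  (#|[set uv in setX G G | ((g ^ uv.1) * (h ^ uv.2))%g == z]|%:R / (#|G| ^ 2)%:R)%R.

(* statistical distance (half l1) between law of C(g)C(h) and uniform on G;
   for g, h in G the law is supported on G. *)
Definition sdist_unif (g h : gT) : R :=
  (2^-1 * \sum_(z in G) `|CCprob g h z - #|G|%:R^-1|)%R.
End Probs.

(* An element of SL(2, q) with trace t, t^2 <> 4 ("regular"), is conjugate in GL(2, q) to
   the companion matrix of X^2 - t X + 1.  In that frame every count below becomes a count
   of points on a plane conic: at most q + 2 points if it is nondegenerate, at most 2q if it
   is fibred into quadratics over a line.  Thus regular elements have centralizers of order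
   at most q + 2, and for regular g, h the u with tr (g h^u) = c number O(q^2) out of
   |G| ~ q^3; conjugacy classes lie in trace fibers, which gives (1).  For (2), the pairs
   (u, v) with g^u h^v = z number at most (q + 2)^3 = |G| (1 + O(1/q)) unless tr z is one of
   at most four exceptional values, which together carry O(|G|^2 / q) pairs; since the
   counts sum to |G|^2, the l1 distance to uniform is O(1/q).  Finally non-regular elements
   form an O(1/q) fraction of G, and both marginals of D are uniform, so (g, h) is a pair of
   regular elements with probability 1 - O(1/q). *)

From HB Require Import structures.
From mathcomp Require Import all_boot all_order all_algebra all_fingroup.
From mathcomp Require Import ring lra zify.
Import Order.TTheory GRing.Theory Num.Theory.

Set Implicit Arguments.
Unset Strict Implicit.
Unset Printing Implicit Defensive.

Lemma leq_card_in_inj (T1 T2 : finType) (A : {set T1}) (B : {set T2}) (f : T1 -> T2) :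
  {in A &, injective f} -> {in A, forall x, f x \in B} -> #|A| <= #|B|.
Proof.
move=> finj fAB; rewrite -(card_in_imset finj); apply: subset_leq_card.
by apply/subsetP => _ /imsetP [x xA ->]; exact: fAB.
Qed.

Lemma card_preimset_sum (T1 T2 : finType) (A : {set T1}) (B : {set T2}) (f : T1 -> T2) :
  #|[set x in A | f x \in B]| = \sum_(y in B) #|[set x in A | f x == y]|.
Proof.
rewrite -sum1_card (partition_big f (mem B)) /=; last by move=> x; rewrite inE => /andP[].
apply: eq_bigr => y yB; rewrite -sum1_card; apply: eq_bigl => x; rewrite !inE.
by case: (eqVneq (f x) y) => [->|]; rewrite ?yB ?andbT ?andbF.
Qed.

Lemma leq_card_preimset (T1 T2 : finType) (A : {set T1}) (B : {set T2}) (f : T1 -> T2) K :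
  {in B, forall y, #|[set x in A | f x == y]| <= K} ->
  #|[set x in A | f x \in B]| <= K * #|B|.
Proof. by move=> hK; rewrite card_preimset_sum mulnC -sum_nat_const; exact: leq_sum. Qed.

Local Open Scope ring_scope.

Lemma ler_nat_ratio (R : numFieldType) (m n a b : nat) : (0 < n)%N -> (0 < b)%N ->
  (m * b <= a * n)%N -> m%:R / n%:R <= a%:R / b%:R :> R.
Proof.
move=> n0 b0 h; rewrite ler_pdivrMr ?ltr0n // mulrAC ler_pdivlMr ?ltr0n //.
by rewrite -!natrM ler_nat.
Qed.

Lemma sumr_norm_le2 (R : realDomainType) (I : finType) (P : {pred I}) (a b : I -> R) :
  \sum_(i in P) a i = 0 -> {in P, forall i, a i <= b i} -> {in P, forall i, 0 <= b i} ->
  \sum_(i in P) `|a i| <= 2 * \sum_(i in P) b i.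
Proof.
move=> a0 ab b0.
(* |a| = 2 max(a, 0) - a, and max(a, 0) <= b *)
have norm_le i : i \in P -> `|a i| <= 2 * b i - a i.
  move=> iP; have := ab i iP; have := b0 i iP.
  by rewrite ler_norml => *; apply/andP; split; lra.
apply: le_trans (ler_sum _ norm_le) _.
by rewrite sumrB -mulr_sumr a0 subr0.
Qed.

Lemma ler_sum_subpred (R : numDomainType) (I : finType) (P Q : pred I) (F : I -> R) :
  (forall i, 0 <= F i) -> (forall i, P i -> Q i) -> \sum_(i | P i) F i <= \sum_(i | Q i) F i.
Proof.
move=> F0 PQ; rewrite [X in _ <= X](bigID P) /=.
rewrite [X in _ <= X + _](eq_bigl P) ?lerDl ?sumr_ge0 // => i.
by case: (boolP (P i)) => [/PQ -> | _]; rewrite ?andbF.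
Qed.

Lemma card_roots_lt_size (R : finIdomainType) (p : {poly R}) :
  p != 0 -> (#|[set x | root p x]| < size p)%N.
Proof.
move=> p0; rewrite cardE; apply: max_poly_roots => //; last exact: enum_uniq.
by apply/allP => x; rewrite mem_enum inE.
Qed.

Lemma card_quadratic_roots (R : finIdomainType) (b c : R) :
  (#|[set y : R | (y ^+ 2 + b * y + c == 0)%R]| <= 2)%N.
Proof.
set p := ('X + b%:P) * 'X + c%:P.
have Xb0 : 'X + b%:P != 0 by rewrite -size_poly_eq0 size_XaddC.
have sp : size p = 3%N by rewrite size_MXaddC (negPf Xb0) size_XaddC.
have p0 : p != 0 by rewrite -size_poly_eq0 sp.
rewrite -ltnS -sp; apply: leq_trans (card_roots_lt_size p0); apply: subset_leq_card.
by apply/subsetP => y; rewrite !inE /root /p !hornerE; congr (_ == 0); ring.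
Qed.

Section Conics.
Variable F : finFieldType.
Local Notation q := #|F|.

Lemma card_conic_fibered (b c : F -> F) :
  (#|[set xy : F * F | (xy.2 ^+ 2 + b xy.1 * xy.2 + c xy.1 == 0)%R]| <= 2 * q)%N.
Proof.
set A := [set _ | _].
have -> : A = [set xy in A | xy.1 \in [set: F]] by apply/setP => xy; rewrite !inE andbT.
rewrite -cardsT; apply: leq_card_preimset => x _.
apply: leq_trans (card_quadratic_roots (b x) (c x)).
apply: (@leq_card_in_inj _ _ _ _ snd) => [[x1 y1] [x2 y2] | [x1 y1]] /=; rewrite !inE /=.
  by move=> /andP [_ /eqP e1] /andP [_ /eqP e2] ->; rewrite e1 e2.
by case/andP => ? /eqP <-.
Qed.

Variables s p r k : F.

Definition conicQ (xy : F * F) :=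
  xy.1 ^+ 2 + s * xy.1 * xy.2 + xy.2 ^+ 2 + p * xy.1 + r * xy.2 + k.

(* -4 times the determinant of the symmetric matrix of conicQ *)
Definition conic_discr := p ^+ 2 - s * p * r + r ^+ 2 + (s ^+ 2 - 4) * k.

Local Notation conic := [set xy | conicQ xy == 0].

(* Along each line y = m x + u the equation becomes linear in x, and it cannot vanish
   identically since the conic is nondegenerate. *)
Lemma card_conic_split (m : F) :
  m ^+ 2 + s * m + 1 = 0 -> conic_discr != 0 -> (#|conic| <= q)%N.
Proof.
move=> hm hE; rewrite -cardsT.
apply: (@leq_card_in_inj _ _ _ _ (fun xy => xy.2 - m * xy.1)); last by move=> *; rewrite inE.
move=> [x y] [x' y']; rewrite !inE => /eqP hq /eqP hq' /= hu.
set u := y - m * x in hu.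
set D := s + 2 * m.
set L := u * D + p + r * m.
set c0 := u ^+ 2 + r * u + k.
have ey : y = m * x + u by rewrite /u; ring.
have ey' : y' = m * x' + u by rewrite hu; ring.
have on_line z : conicQ (z, m * z + u) = z * L + c0.
  transitivity (z ^+ 2 * (m ^+ 2 + s * m + 1) + (z * L + c0)); last by rewrite hm mulr0 add0r.
  by rewrite /conicQ /L /c0 /D /=; ring.
have e1 : x * L + c0 = 0 by rewrite -on_line -ey.
have e2 : x' * L + c0 = 0 by rewrite -on_line -ey'.
have L0 : L != 0.
  apply: contraNneq hE => L0; apply/eqP.
  have c00 : c0 = 0 by rewrite -e1 L0 mulr0 add0r.
  have -> : conic_discr = L * (L - 2 * u * D - r * D) + D ^+ 2 * c0
                          + (r ^+ 2 - 4 * k) * (m ^+ 2 + s * m + 1).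
    by rewrite /conic_discr /L /D /c0; ring.
  by rewrite L0 c00 hm; ring.
have ex : x = x' by apply: (mulIf L0); apply: (addIr c0); rewrite e1 e2.
by rewrite ey ey' ex.
Qed.

Lemma conicQ_line (x0 y0 t d1 d2 : F) :
  conicQ (x0 + t * d1, y0 + t * d2) = conicQ (x0, y0) +
    t * (t * (d1 ^+ 2 + s * d1 * d2 + d2 ^+ 2)
         + (d1 * (2 * x0 + s * y0 + p) + d2 * (s * x0 + 2 * y0 + r))).
Proof. by rewrite /conicQ /=; ring. Qed.

(* Every point other than a base point P0 lies on exactly one line through P0, and when
   the quadratic part is anisotropic each such line meets the conic at most once more. *)
Lemma card_conic_anisotropic :
  (forall m, m ^+ 2 + s * m + 1 != 0) -> (#|conic| <= q + 2)%N.
Proof.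
move=> aniso.
have quad_neq0 d1 d2 : (d1, d2) != (0, 0) -> d1 ^+ 2 + s * d1 * d2 + d2 ^+ 2 != 0.
  case: (eqVneq d1 0) => [-> | d1n0].
    by rewrite xpair_eqE eqxx /= expr0n /= mulr0 mul0r !add0r sqrf_eq0.
  move=> _; apply: contraNneq (aniso (d2 / d1)) => h.
  by apply/eqP; apply: (mulIf (expf_neq0 2 d1n0)); rewrite mul0r -h; field.
set C := [set _ | _]; case: (set_0Vmem C) => [-> | [[x0 y0] P0]]; first by rewrite cards0.
move: P0; rewrite inE => /eqP P0.
pose dir (o : option F) : F * F := if o is Some m then (1, m) else (0, 1).
pose slope (P : F * F) := if P.1 == x0 then None else Some ((P.2 - y0) / (P.1 - x0)).
pose lin (e : F * F) := e.1 * (2 * x0 + s * y0 + p) + e.2 * (s * x0 + 2 * y0 + r).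
pose quad (e : F * F) := e.1 ^+ 2 + s * e.1 * e.2 + e.2 ^+ 2.
pose point o := let e := dir o in let t := - lin e / quad e in (x0 + t * e.1, y0 + t * e.2).
pose f P := if P == (x0, y0) then None else Some (slope P).
pose g w := if w is Some o then point o else (x0, y0).
have param P : P != (x0, y0) -> exists2 t, t != 0 &
    P = (x0 + t * (dir (slope P)).1, y0 + t * (dir (slope P)).2).
  case: P => x y; rewrite /slope /=; case: (eqVneq x x0) => [-> | nx] nP.
    exists (y - y0); last by rewrite /= mulr0 mulr1 addr0 subrKC.
    by rewrite subr_eq0; apply: contraNneq nP => ->.
  exists (x - x0); first by rewrite subr_eq0.
  by rewrite /= mulr1 subrKC mulrC divfK ?subrKC ?subr_eq0.
have fK : {in C, cancel f g}.
  move=> P; rewrite inE /f /g => /eqP PC; case: eqVneq => [-> // | nP].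
  have [t t0 eP] := param P nP; rewrite [RHS]eP /point.
  set e := dir (slope P) in eP *.
  have e0 : (e.1, e.2) != (0, 0).
    by rewrite /e; case: (slope P) => [m|]; rewrite /= xpair_eqE ?oner_eq0 ?andbF.
  have {}e0 := quad_neq0 _ _ e0.
  move: PC; rewrite eP conicQ_line P0 add0r => /eqP; rewrite mulf_eq0 (negPf t0) /=.
  rewrite addr_eq0 => /eqP ht.
  by rewrite (_ : - lin e / quad e = t) // /lin /quad -ht mulfK.
apply: leq_trans (_ : #|[set: option (option F)]| <= _)%N.
  by apply: (leq_card_in_inj (f := f)); [exact: can_in_inj fK | move=> *; rewrite inE].
by rewrite cardsT !card_option addn2.
Qed.

Lemma card_conic : conic_discr != 0 -> (#|conic| <= q + 2)%N.
Proof.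
move=> hE; case: (pickP (fun m : F => m ^+ 2 + s * m + 1 == 0)) => [m /eqP hm | aniso].
  by apply: leq_trans (card_conic_split hm hE) (leq_addr _ _).
by apply: card_conic_anisotropic => m; rewrite aniso.
Qed.
End Conics.

Lemma ord2P (i : 'I_2) : i = 0 \/ i = 1.
Proof. by case: i => [[|[|m]]] Hi; [left | right | by []]; exact: val_inj. Qed.

Lemma ord0_2 : ord0 = 0 :> 'I_2. Proof. exact: val_inj. Qed.
Lemma lift0_2 : lift ord0 ord0 = 1 :> 'I_2. Proof. exact: val_inj. Qed.

Lemma mx2P (T : Type) (M N : 'M[T]_2) :
  M 0 0 = N 0 0 -> M 0 1 = N 0 1 -> M 1 0 = N 1 0 -> M 1 1 = N 1 1 -> M = N.
Proof.
move=> h00 h01 h10 h11; apply/matrixP => i j.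
by case: (ord2P i) => ->; case: (ord2P j) => ->.
Qed.

Lemma mulmx2E (R : pzSemiRingType) (M N : 'M[R]_2) i j :
  (M *m N) i j = M i 0 * N 0 j + M i 1 * N 1 j.
Proof. by rewrite mxE !big_ord_recl big_ord0 addr0 lift0_2 ord0_2. Qed.

Lemma mxtrace2 (R : pzSemiRingType) (M : 'M[R]_2) : \tr M = M 0 0 + M 1 1.
Proof. by rewrite /mxtrace !big_ord_recl big_ord0 addr0 lift0_2 ord0_2. Qed.

Lemma det_mx2 (R : comPzRingType) (M : 'M[R]_2) : \det M = M 0 0 * M 1 1 - M 0 1 * M 1 0.
Proof.
rewrite (expand_det_row _ 0) !big_ord_recl big_ord0 addr0 /cofactor !det_mx11 !mxE /=.
rewrite expr0 expr1 !mul1r mulN1r mulrN.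
by congr (M _ _ * M _ _ - M _ _ * M _ _); apply: val_inj.
Qed.

Definition mx2 (T : Type) (a b c d : T) : 'M[T]_2 :=
  \matrix_(i, j) if i == 0 then (if j == 0 then a else b) else (if j == 0 then c else d).

Lemma mx2E (T : Type) (a b c d : T) :
  ((mx2 a b c d 0 0 = a) * (mx2 a b c d 0 1 = b) *
   (mx2 a b c d 1 0 = c) * (mx2 a b c d 1 1 = d))%type.
Proof. by rewrite !mxE. Qed.

Lemma invmx2 (R : comUnitRingType) (M : 'M[R]_2) :
  \det M = 1 -> invmx M = mx2 (M 1 1) (- M 0 1) (- M 1 0) (M 0 0).
Proof.
move=> hd; have U : M \in unitmx by rewrite unitmxE hd unitr1.
have MB : M *m mx2 (M 1 1) (- M 0 1) (- M 1 0) (M 0 0) = 1%:M.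
  move: hd; rewrite det_mx2 => hd.
  by apply: mx2P; rewrite !mulmx2E !mx2E !mxE /= -hd; ring.
by rewrite -[RHS]mul1mx -(mulVmx U) -mulmxA MB mulmx1.
Qed.

Definition companion (R : pzRingType) (c : R) : 'M[R]_2 := mx2 0 (-1) 1 c.

Lemma commute_companion (R : comPzRingType) (M : 'M[R]_2) c :
  M *m companion c = companion c *m M -> M 0 1 = - M 1 0 /\ M 1 1 = M 0 0 + c * M 1 0.
Proof.
move=> h; have /= := congr1 (fun A : 'M[R]_2 => A 0 0) h.
have /= := congr1 (fun A : 'M[R]_2 => A 0 1) h.
rewrite !mulmx2E !mx2E !mul0r !add0r !mulN1r => h01 h00.
have e01 : M 0 1 = - M 1 0 by rewrite -h00; ring.
by split => //; rewrite -[M 1 1]opprK -h01 e01; ring.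
Qed.

Lemma companion_similar (F : fieldType) (M : 'M[F]_2) :
  \det M = 1 -> (\tr M) ^+ 2 - 4 != 0 ->
  exists2 S, S \in unitmx & M *m S = S *m companion (\tr M).
Proof.
rewrite det_mx2 mxtrace2 => hd htr.
case: (eqVneq (M 1 0) 0) => h10; last first.
  exists (mx2 1 (M 0 0) 0 (M 1 0)).
    by rewrite unitmxE det_mx2 !mx2E unitfE mul1r mulr0 subr0.
  apply: mx2P; rewrite !mulmx2E /companion !mx2E; try ring.
  by rewrite -[X in X * -1]hd; ring.
case: (eqVneq (M 0 1) 0) => h01; last first.
  exists (mx2 0 (M 0 1) 1 (M 1 1)).
    by rewrite unitmxE det_mx2 !mx2E unitfE mul0r mulr1 sub0r oppr_eq0.
  apply: mx2P; rewrite !mulmx2E /companion !mx2E ?h10; try ring.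
  by rewrite -[X in X * -1]hd h10; ring.
have h0011 : M 0 0 != M 1 1.
  apply: contraNneq htr => e; apply/eqP; rewrite -e.
  by move: hd; rewrite h01 h10 mul0r subr0 -e => hd; rewrite -hd; ring.
exists (mx2 1 (M 0 0) 1 (M 1 1)).
  by rewrite unitmxE det_mx2 !mx2E unitfE mul1r mulr1 subr_eq0 eq_sym.
apply: mx2P; rewrite !mulmx2E /companion !mx2E ?h10 ?h01; try ring.
all: by rewrite -[X in X * -1]hd h01 h10; ring.
Qed.

Section SL2.
Variable F : finFieldType.
Local Notation gT := {'GL_2[F]}.
Local Notation G := (SL2 F).
Local Notation q := #|F|.

Lemma SL2E (x : gT) : (x \in G) = (\det (GLval x) == 1).
Proof. by rewrite inE. Qed.

Lemma SL2M (x y : gT) : x \in G -> y \in G -> (x * y)%g \in G.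
Proof. by rewrite !SL2E GL_MxE det_mulmx => /eqP -> /eqP ->; rewrite mulr1. Qed.

Lemma SL2V (x : gT) : x \in G -> (x^-1)%g \in G.
Proof. by rewrite !SL2E GL_VxE det_inv => /eqP ->; rewrite invr1. Qed.

Lemma card_conj_fiber (g x : gT) :
  (#|[set w in G | (g ^ w == x)%g]| <= #|'C_G[g]%g|)%N.
Proof.
set A := [set _ in _ | _]; case: (set_0Vmem A) => [-> | [w0]]; first by rewrite cards0.
rewrite inE => /andP [w0G /eqP gw0].
apply: (@leq_card_in_inj _ _ _ _ (fun w => w * w0^-1)%g) => [w w' _ _ /mulIg // | w].
rewrite inE => /andP [wG /eqP gw]; rewrite inE SL2M ?SL2V //=.
apply/cent1P/commute_sym; rewrite /commute conjgC; congr (_ * _)%g.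
by rewrite conjgM gw -gw0 conjgK.
Qed.

Lemma GLval_conj (x u : gT) : GLval (x ^ u)%g = invmx u *m x *m u.
Proof. by rewrite conjgE !GL_MxE GL_VxE mulmxA. Qed.

Lemma mxtrace_conj (x u : gT) : \tr (GLval (x ^ u)%g) = \tr x.
Proof.
by rewrite GLval_conj -mulmxA mxtrace_mulC -mulmxA mulmxV ?GL_unitmx // mulmx1.
Qed.

Lemma det_conj (x u : gT) : \det (GLval (x ^ u)%g) = \det x.
Proof.
rewrite GLval_conj !det_mulmx det_inv mulrC mulrA mulrV ?mul1r //.
by rewrite -unitmxE GL_unitmx.
Qed.

Lemma SL2_conj (x u : gT) : x \in G -> (x ^ u)%g \in G.
Proof. by rewrite !SL2E det_conj. Qed.

Lemma mxtrace_class (x y : gT) : y \in (x ^: G)%g -> \tr y = \tr x.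
Proof. by case/imsetP => u _ ->; rewrite mxtrace_conj. Qed.

Lemma conj_companion (g : gT) : g \in G -> (\tr g) ^+ 2 - 4 != 0 ->
  exists S : gT, GLval (g ^ S)%g = companion (\tr g).
Proof.
rewrite SL2E => /eqP gdet /(companion_similar gdet) [S Su gS].
exists (FinRing.unit _ (Su : S \is a GRing.unit)).
by rewrite GLval_conj /= -mulmxA gS mulmxA mulVmx ?mul1mx.
Qed.

Lemma leq_card_first_column (A : {set gT}) (S : gT) (B : {set F * F}) (f : F * F -> F * F) :
  {in A, forall X, let M := GLval (X ^ S)%g in
     (M 0 1, M 1 1) = f (M 0 0, M 1 0) /\ (M 0 0, M 1 0) \in B} ->
  (#|A| <= #|B|)%N.
Proof.
move=> hA; apply: (leq_card_in_inj
  (f := fun X => let M := GLval (X ^ S)%g in (M 0 0, M 1 0))); last by move=> X /hA [].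
move=> X Y /hA [eX _] /hA [eY _] /= eXY.
have [e01 e11] : (GLval (X ^ S)%g 0 1, GLval (X ^ S)%g 1 1)
               = (GLval (Y ^ S)%g 0 1, GLval (Y ^ S)%g 1 1) by rewrite eX eXY eY.
case: eXY => e00 e10.
by apply: (conjg_inj S); apply: val_inj; apply: mx2P.
Qed.

Lemma card_centralizer_SL2 (g : gT) : g \in G -> (\tr g) ^+ 2 - 4 != 0 ->
  (#|'C_G[g]%g| <= q + 2)%N.
Proof.
move=> gG hs; have [S gS] := conj_companion gG hs; set s := \tr g in hs gS.
have hE : conic_discr s 0 0 (-1) != 0.
  by rewrite /conic_discr (_ : _ + _ = - (s ^+ 2 - 4)) ?oppr_eq0 //; ring.
apply: leq_trans (card_conic hE).
apply: (leq_card_first_column (S := S) (f := fun xy => (- xy.2, xy.1 + s * xy.2))) => X.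
rewrite inE => /andP [XG /cent1P Xg]; set M := GLval (X ^ S)%g; rewrite /=.
have [e01 e11] : M 0 1 = - M 1 0 /\ M 1 1 = M 0 0 + s * M 1 0.
  apply: commute_companion; rewrite -gS.
  by change (GLval (X ^ S * g ^ S)%g = GLval (g ^ S * X ^ S)%g); rewrite -!conjMg Xg.
split; first by rewrite e01 e11.
move: (SL2_conj S XG); rewrite SL2E det_mx2 -/M e01 e11 inE /conicQ /= => /eqP det1.
by apply/eqP; rewrite -[X in _ - X]det1; ring.
Qed.

Lemma card_trace_pairs (g : gT) (a t : F) : g \in G -> (\tr g) ^+ 2 - 4 != 0 ->
  (#|[set Y in G | (\tr (GLval Y) == a) && (\tr (GLval (g * Y)%g) == t)]| <= 2 * q)%N.
Proof.
move=> gG hs; have [S gS] := conj_companion gG hs; set s := \tr g in hs gS.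
apply: leq_trans (card_conic_fibered (fun x => t - s * (a - x)) (fun x => 1 - x * (a - x))).
apply: (leq_card_first_column (S := S) (f := fun xy => (t + xy.2 - s * (a - xy.1), a - xy.1))).
move=> Y; rewrite inE => /and3P [YG /eqP Ya /eqP gYt].
have := mxtrace_conj (g * Y) S; rewrite gYt conjMg GL_MxE gS.
have := mxtrace_conj Y S; rewrite Ya.
have := SL2_conj S YG; rewrite SL2E.
move: (GLval (Y ^ S)%g) => M /= /eqP det1 trM trgM.
have e11 : M 1 1 = a - M 0 0 by rewrite -trM mxtrace2; ring.
have e01 : M 0 1 = t + M 1 0 - s * (a - M 0 0).
  by rewrite -trgM mxtrace2 !mulmx2E /companion !mx2E e11; ring.
split; first by rewrite e01 e11.
move: det1; rewrite det_mx2 e01 e11 inE => det1.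
by apply/eqP; rewrite /= -[X in _ + (X - _) = _]det1; ring.
Qed.

Lemma card_trace_quotients (z : gT) (a b : F) : z \in G -> (\tr z) ^+ 2 - 4 != 0 ->
  a ^+ 2 - \tr z * a * b + b ^+ 2 + ((\tr z) ^+ 2 - 4) != 0 ->
  (#|[set X in G | (\tr (GLval X) == a) && (\tr (GLval (X^-1 * z)%g) == b)]| <= q + 2)%N.
Proof.
move=> zG hs hE; have [S zS] := conj_companion zG hs; set c := \tr z in hs hE zS.
have hE' : conic_discr c (- a) (- b) 1 != 0.
  by rewrite /conic_discr (_ : _ + _ = a ^+ 2 - c * a * b + b ^+ 2 + (c ^+ 2 - 4)) //; ring.
apply: leq_trans (card_conic hE').
apply: (leq_card_first_column (S := S) (f := fun xy => (xy.2 + c * xy.1 - b, a - xy.1))).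
move=> X; rewrite inE => /and3P [XG /eqP Xa /eqP Xzb].
have := mxtrace_conj (X^-1 * z) S; rewrite Xzb conjMg conjVg GL_MxE GL_VxE zS.
have := mxtrace_conj X S; rewrite Xa.
have := SL2_conj S XG; rewrite SL2E.
move: (GLval (X ^ S)%g) => M /= /eqP det1 trM trMz.
have e11 : M 1 1 = a - M 0 0 by rewrite -trM mxtrace2; ring.
have e01 : M 0 1 = M 1 0 + c * M 0 0 - b.
  by rewrite -trMz invmx2 // mxtrace2 !mulmx2E /companion !mx2E; ring.
split; first by rewrite e01 e11.
move: det1; rewrite det_mx2 e01 e11 inE /conicQ /= => det1.
by apply/eqP; rewrite -[X in _ + X = _]det1; ring.
Qed.

Lemma card_trace_fiber (c : F) : (#|[set X in G | \tr (GLval X) == c]| <= 2 * (q * q))%N.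
Proof.
(* a nonzero (0, 1) entry determines the (1, 0) entry through the determinant *)
pose code (X : gT) := (GLval X 0 1 == 0, GLval X 0 0,
                       if GLval X 0 1 == 0 then GLval X 1 0 else GLval X 0 1).
have -> : (2 * (q * q) = #|[set: bool * F * F]|)%N by rewrite cardsT !card_prod card_bool mulnA.
apply: (leq_card_in_inj (f := code)); last by move=> *; rewrite inE.
move=> X Y; rewrite !inE !det_mx2 !mxtrace2 /code.
move=> /andP [/eqP dX /eqP tX] /andP [/eqP dY /eqP tY] [e0 e00 e].
have eX : GLval X 1 1 = c - GLval X 0 0 by rewrite -tX; ring.
have eY : GLval Y 1 1 = c - GLval Y 0 0 by rewrite -tY; ring.
apply: val_inj; move: e0 e.
case: (eqVneq (GLval X 0 1) 0) => hx; case: (eqVneq (GLval Y 0 1) 0) => hy //= _ e.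
  by apply: mx2P; rewrite ?hx ?hy ?eX ?eY ?e00 ?e.
apply: mx2P; rewrite ?eX ?eY ?e00 ?e //.
apply: (mulfI hy); rewrite -{1}e.
have -> : GLval X 0 1 * GLval X 1 0 = GLval X 0 0 * GLval X 1 1 - 1 by rewrite -dX; ring.
have -> : GLval Y 0 1 * GLval Y 1 0 = GLval Y 0 0 * GLval Y 1 1 - 1 by rewrite -dY; ring.
by rewrite eX eY e00.
Qed.
End SL2.

Section Counting.
Variable F : finFieldType.
Local Notation gT := {'GL_2[F]}.
Local Notation G := (SL2 F).
Local Notation q := #|F|.
Local Notation N := #|SL2 F|.

Definition regular (x : gT) := (x \in G) && ((\tr x) ^+ 2 - 4 != 0).

Lemma card_conj_trace (g h : gT) (c : F) : regular g -> regular h ->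
  (#|[set w in G | \tr (GLval (g * h ^ w)%g) == c]| <= (q + 2) * (2 * q))%N.
Proof.
move=> /andP [gG gs] /andP [hG hs].
set B := [set Y in G | (\tr (GLval Y) == \tr h) && (\tr (GLval (g * Y)%g) == c)].
apply: leq_trans (_ : #|[set w in G | (h ^ w)%g \in B]| <= _)%N.
  apply: subset_leq_card; apply/subsetP => w; rewrite inE => /andP [wG hw].
  by rewrite inE wG /= inE SL2_conj //= mxtrace_conj eqxx.
apply: leq_trans (leq_card_preimset (K := q + 2) _) _.
  by move=> Y _; apply: leq_trans (card_conj_fiber h Y) (card_centralizer_SL2 hG hs).
by rewrite leq_mul2l card_trace_pairs ?orbT.
Qed.

Lemma card_conj_class (g h x : gT) : regular g -> regular h ->
  (#|[set u in G | (g * h ^ u)%g \in (x ^: G)%g]| <= (q + 2) * (2 * q))%N.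
Proof.
move=> gr hr; apply: leq_trans (card_conj_trace (\tr x) gr hr).
apply: subset_leq_card; apply/subsetP => u; rewrite inE => /andP [uG hu].
by rewrite inE uG (mxtrace_class hu) /=.
Qed.

Definition nconj_prod (g h z : gT) :=
  #|[set uv in setX G G | (g ^ uv.1 * h ^ uv.2 == z)%g]|.

(* g^u h^v = z forces g^u to be an X with tr X = tr g and tr (X^-1 z) = tr h; given X,
   the pair (u, v) is determined up to the centralizers of g and h. *)
Lemma nconj_prod_regular (g h z : gT) : regular g -> regular h -> regular z ->
  (\tr g) ^+ 2 - \tr z * \tr g * \tr h + (\tr h) ^+ 2 + ((\tr z) ^+ 2 - 4) != 0 ->
  (nconj_prod g h z <= (q + 2) * (q + 2) * (q + 2))%N.
Proof.
move=> /andP [gG gs] /andP [hG hs] /andP [zG zs] hE.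
rewrite /nconj_prod; set A := [set uv in setX G G | _].
set B := [set X in G | (\tr (GLval X) == \tr g) && (\tr (GLval (X^-1 * z)%g) == \tr h)].
apply: leq_trans (_ : #|[set uv in A | (g ^ uv.1)%g \in B]| <= _)%N.
  apply: subset_leq_card; apply/subsetP => -[u v] uvA; rewrite inE uvA /=.
  move: uvA; rewrite inE in_setX => /andP [/andP [uG vG] /eqP e].
  rewrite /B inE SL2_conj // mxtrace_conj eqxx.
  by rewrite (_ : ((g ^ u)^-1 * z = h ^ v)%g) ?mxtrace_conj ?eqxx // -e mulKg.
apply: leq_trans (leq_card_preimset (K := (q + 2) * (q + 2)) _) _; last first.
  by rewrite leq_mul2l card_trace_quotients ?orbT.
move=> X _.
apply: leq_trans (_ : #|setX [set u in G | (g ^ u == X)%g]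
                              [set v in G | (h ^ v == X^-1 * z)%g]| <= _)%N.
  apply: subset_leq_card; apply/subsetP => -[u v].
  rewrite !inE /= => /andP [/andP [/andP [uG vG] /eqP e] /eqP eX].
  by rewrite uG vG -eX -e mulKg !eqxx.
rewrite cardsX leq_mul //.
  exact: leq_trans (card_conj_fiber g X) (card_centralizer_SL2 gG gs).
exact: leq_trans (card_conj_fiber h _) (card_centralizer_SL2 hG hs).
Qed.

Lemma sum_nconj_prod (g h : gT) : g \in G -> h \in G ->
  (\sum_(z in G) nconj_prod g h z = N * N)%N.
Proof.
move=> gG hG; rewrite -(card_preimset_sum (setX G G) G (fun uv => g ^ uv.1 * h ^ uv.2)%g).
rewrite -cardsX; apply: eq_card => -[u v]; rewrite inE /=.
case: (boolP ((u, v) \in setX G G)) => //; rewrite in_setX => /andP [uG vG].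
by rewrite SL2M ?SL2_conj.
Qed.

Lemma card_conj_pairs_trace (g h : gT) (c : F) : regular g -> regular h ->
  (#|[set uv in setX G G | \tr (GLval (g ^ uv.1 * h ^ uv.2)%g) == c]|
     <= (q + 2) * (2 * q) * N)%N.
Proof.
move=> gr hr; set A := [set uv in setX G G | _].
have -> : A = [set uv in A | uv.1 \in G].
  apply/setP => -[u v]; rewrite [in RHS]inE andb_idr //.
  by rewrite inE in_setX => /andP [/andP []].
apply: leq_card_preimset => u uG; apply: leq_trans (card_conj_trace c gr hr).
(* conjugating by u^-1 reduces tr (g^u h^v) to tr (g h^(v u^-1)) *)
apply: (@leq_card_in_inj _ _ _ _ (fun uv : gT * gT => uv.2 * u^-1)%g).
  move=> [u1 v1] [u2 v2]; rewrite !inE /= => /andP [_ /eqP e1] /andP [_ /eqP e2] /mulIg e.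
  by rewrite e1 e2 e.
move=> [u1 v]; rewrite inE => /andP [uvA /eqP e].
move: uvA; rewrite inE in_setX => /andP [/andP [_ vG] ht].
have vuG : (v * u^-1 \in G)%g by rewrite SL2M ?SL2V.
rewrite inE vuG andTb -(mxtrace_conj _ u) conjMg -conjgM mulgKV -e.
exact: ht.
Qed.

Definition exceptional_traces (a b : F) : {set F} :=
  [set c : F | (c ^+ 2 - 4 == 0) || (a ^+ 2 - c * a * b + b ^+ 2 + (c ^+ 2 - 4) == 0)].

Lemma card_exceptional_traces (a b : F) : (#|exceptional_traces a b| <= 4)%N.
Proof.
pose A := [set c : F | c ^+ 2 + 0 * c + (-4) == 0].
pose B := [set c : F | c ^+ 2 + (- (a * b)) * c + (a ^+ 2 + b ^+ 2 - 4) == 0].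
apply: leq_trans (_ : #|A :|: B| <= _)%N; last first.
  apply: leq_trans (leq_card_setU _ _) _.
  exact: leq_add (card_quadratic_roots _ _) (card_quadratic_roots _ _).
apply/subset_leq_card/subsetP => c; rewrite !inE.
have -> : c ^+ 2 + 0 * c + (-4) = c ^+ 2 - 4 by ring.
suff -> : c ^+ 2 + (- (a * b)) * c + (a ^+ 2 + b ^+ 2 - 4)
          = a ^+ 2 - c * a * b + b ^+ 2 + (c ^+ 2 - 4) by [].
by ring.
Qed.

Lemma sum_nconj_prod_exceptional (g h : gT) : regular g -> regular h ->
  (\sum_(z in [set z in G | \tr (GLval z) \in exceptional_traces (\tr g) (\tr h)])
     nconj_prod g h z <= 4 * ((q + 2) * (2 * q) * N))%N.
Proof.
move=> gr hr; rewrite -card_preimset_sum.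
apply: leq_trans (_ : #|[set uv in setX G G |
    \tr (GLval (g ^ uv.1 * h ^ uv.2)%g) \in exceptional_traces (\tr g) (\tr h)]| <= _)%N.
  by apply: subset_leq_card; apply/subsetP => uv; rewrite !inE => /andP [-> /andP [_ ->]].
apply: leq_trans (leq_card_preimset (K := (q + 2) * (2 * q) * N) _) _.
  by move=> c _; apply: card_conj_pairs_trace.
by rewrite mulnC leq_mul2r card_exceptional_traces orbT.
Qed.

End Counting.

Section Probabilities.
Variables (F : finFieldType) (R : realFieldType).
Local Notation gT := {'GL_2[F]}.
Local Notation G := (SL2 F).
Local Notation q := #|F|.
Local Notation N := #|SL2 F|.

Lemma card_SL2_ge : (q * q.-1 * q.+1 <= N)%N.
Proof.
have q1 := card_finNzRing_gt1 F.
(* every fiber of the determinant on GL_2 is a coset of SL_2 *)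
have hGL : (q * q.-1 ^ 2 * q.+1 <= N * q.-1)%N.
  rewrite -card_GL_2.
  apply: (@leq_trans #|[set x in [set: gT] | \det (GLval x) \in [set~ (0 : F)]]|).
    by apply/subset_leq_card/subsetP => x _; rewrite !inE; exact: GL_det.
  rewrite -(cardsC1 (0 : F)); apply: leq_card_preimset => l _.
  set Fb := [set x in _ | _]; case: (set_0Vmem Fb) => [-> | [y0]]; first by rewrite cards0.
  rewrite inE => /andP [_ /eqP hy0].
  apply: (@leq_card_in_inj _ _ Fb G (fun x => x * y0^-1)%g) => [x x' _ _ /mulIg // | x].
  rewrite inE => /andP [_ /eqP hx].
  rewrite SL2E GL_MxE GL_VxE det_mulmx det_inv hx hy0 mulfV //.
  by rewrite -hy0 GL_det.
have q1' : (0 < q.-1)%N by rewrite -ltnS prednK // ltnW.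
rewrite -(leq_pmul2r q1'); apply: leq_trans hGL.
by rewrite (_ : (q * q.-1 ^ 2 * q.+1 = q * q.-1 * q.+1 * q.-1)%N) //; ring.
Qed.

Lemma card_SL2_gt0 : (0 < N)%N.
Proof.
apply: leq_trans card_SL2_ge; have := card_finNzRing_gt1 F.
by case: #|F| => [|[|m]].
Qed.

Lemma card_nonregular : (#|[set x in G | ~~ regular x]| <= 2 * (q * q) * 2)%N.
Proof.
set C := [set c : F | c ^+ 2 + 0 * c + (-4) == 0].
apply: leq_trans (_ : #|[set x in G | \tr (GLval x) \in C]| <= _)%N.
  apply/subset_leq_card/subsetP => x; rewrite !inE /regular.
  case/andP => xG; rewrite SL2E xG negbK /= => /eqP t2.
  by apply/eqP; rewrite -[RHS]t2; ring.
apply: leq_trans (leq_card_preimset (K := 2 * (q * q)) _) _.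
  by move=> c _; apply: card_trace_fiber.
by rewrite leq_mul2l card_quadratic_roots orbT.
Qed.

Lemma probC_le (g h x : gT) : regular g -> regular h ->
  probC R g h (x ^: G)%g <= 100%:R / q%:R.
Proof.
move=> gr hr; rewrite /probC; apply: ler_nat_ratio; first exact: card_SL2_gt0.
  exact: ltnW (card_finNzRing_gt1 F).
have := card_conj_class x gr hr; have := card_SL2_ge; have := card_finNzRing_gt1 F.
move: #|[set u in G | _]| N => n M; case: #|F| => [|[|m]] //= _ h1 h2; nia.
Qed.

Lemma sdist_unif_le_excess (g h : gT) (b : gT -> nat) : g \in G -> h \in G ->
  {in G, forall z, (nconj_prod g h z)%:R - N%:R <= (b z)%:R :> R} ->
  sdist_unif R g h <= (\sum_(z in G) b z)%:R / (N * N)%:R.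
Proof.
move=> gG hG ab; have N0 := card_SL2_gt0.
have sum_excess : \sum_(z in G) ((nconj_prod g h z)%:R - N%:R) = 0 :> R.
  rewrite sumrB -natr_sum sum_nconj_prod // sumr_const.
  by rewrite -[X in _ - X]mulr_natr -natrM subrr.
have dist z : `|CCprob R g h z - N%:R^-1| = `|(nconj_prod g h z)%:R - N%:R| / (N * N)%:R.
  have -> : CCprob R g h z = (nconj_prod g h z)%:R / (N * N)%:R.
    by rewrite /CCprob expnS expn1.
  rewrite (_ : _ - _ = ((nconj_prod g h z)%:R - N%:R) / (N * N)%:R) ?normf_div ?normr_nat //.
  by field; rewrite pnatr_eq0 -lt0n.
rewrite /sdist_unif (eq_bigr _ (fun z _ => dist z)) -mulr_suml.
apply: le_trans (_ : 2^-1 * (2 * (\sum_(z in G) b z)%:R / (N * N)%:R) <= _); last first.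
  by rewrite !mulrA mulVf ?pnatr_eq0 // mul1r.
rewrite ler_pM2l ?invr_gt0 ?ltr0n // ler_pM2r ?invr_gt0 ?ltr0n ?muln_gt0 ?N0 //.
by rewrite natr_sum; apply: sumr_norm_le2 => // z _; rewrite ler0n.
Qed.

Lemma sdist_unif_le (g h : gT) : regular g -> regular h ->
  sdist_unif R g h <= 100%:R / q%:R.
Proof.
move=> gr hr; have /andP [gG _] := gr; have /andP [hG _] := hr.
have q1 := card_finNzRing_gt1 F; have N0 := card_SL2_gt0.
set n := nconj_prod g h.
set K0 := ((q + 2) * (q + 2) * (q + 2))%N.
set L := (q * q.-1 * q.+1)%N.
set K1 := ((q + 2) * (2 * q))%N.
have NL : (L <= N)%N := card_SL2_ge.
have LK0 : (L <= K0)%N by rewrite /L /K0; case: #|F| q1 => [|[|m]] //= _; nia.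
(* away from the exceptional traces, each z is hit at most K0 <= N + (K0 - L) times *)
pose exc (z : gT) := \tr (GLval z) \in exceptional_traces (\tr g) (\tr h).
pose b (z : gT) := if exc z then n z else (K0 - L)%N.
apply: le_trans (sdist_unif_le_excess (b := b) gG hG _) _.
  move=> z zG; rewrite /b; case: ifP => [_ | /negbT].
    by rewrite lerBlDr lerDl ler0n.
  rewrite /exc inE negb_or => /andP [zs hE].
  rewrite natrB // lerB ?ler_nat //.
  by apply: nconj_prod_regular; rewrite // /regular zG.
have sum_b : (\sum_(z in G) b z <= N * (4 * K1 + (K0 - L)))%N.
  apply: leq_trans (_ : \sum_(z in G) ((if exc z then n z else 0) + (K0 - L)) <= _)%N.
    by apply: leq_sum => z _; rewrite /b; case: ifP; rewrite ?leq_addr.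
  rewrite big_split /= sum_nat_const mulnDr leq_add2r -big_mkcondr /= mulnC -mulnA.
  rewrite (eq_bigl (mem [set z in G | exc z])); first exact: sum_nconj_prod_exceptional.
  by move=> z; rewrite /= [in RHS]inE.
apply: ler_nat_ratio; [by rewrite muln_gt0 N0 | exact: ltnW q1 |].
apply: leq_trans (leq_mul sum_b (leqnn q)) _.
rewrite -mulnA (mulnC 100) -mulnA leq_pmul2l //.
rewrite /K1 /K0 /L; move: NL; rewrite /L; case: #|F| q1 => [|[|m]] //= _; nia.
Qed.

Lemma nonregular_mass_le :
  2 * (#|[set x in G | ~~ regular x]|%:R / N%:R) <= 100%:R / q%:R :> R.
Proof.
have q1 := card_finNzRing_gt1 F; rewrite mulrA -natrM.
apply: ler_nat_ratio; [exact: card_SL2_gt0 | exact: ltnW q1 |].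
have := card_nonregular; have := card_SL2_ge.
move: #|[set x in G | _]| N => b M; case: #|F| q1 => [|[|m]] //= _ h1 h2; nia.
Qed.

Lemma sum_uniform_compl (f : gT -> R) (P : pred gT) :
  (forall x, f x = (x \in G)%:R / N%:R) ->
  \sum_(x | ~~ P x) f x = #|[set x in G | ~~ P x]|%:R / N%:R.
Proof.
move=> hf; rewrite (eq_bigr _ (fun x _ => hf x)) -mulr_suml -natr_sum.
congr (_%:R / _); rewrite -sum1_card [RHS]big_mkcond [LHS]big_mkcond.
by apply: eq_bigr => x _; rewrite inE andbC; case: (~~ P x); case: (x \in G).
Qed.

Lemma mass_good_pairs_ge (D : gT * gT -> R) (P : pred gT) :
  is_distr D -> marginals_uniform D ->
  1 - 2 * (#|[set x in G | ~~ P x]|%:R / N%:R) <= \sum_(p | P p.1 && P p.2) D p.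
Proof.
move=> [D0 D1] [M1 M2]; set B := _ / _.
have mass1 : \sum_(p | ~~ P p.1) D p = B.
  rewrite /B -(sum_uniform_compl P M1) pair_big_dep /=.
  by apply: eq_big => [[x y] | [x y] _]; rewrite ?andbT.
have mass2 : \sum_(p | ~~ P p.2) D p = B.
  rewrite /B -(sum_uniform_compl P M2) exchange_big pair_big_dep /=.
  by apply: eq_bigr => -[x y].
have bad_le : \sum_(p | ~~ (P p.1 && P p.2)) D p
              <= \sum_(p | ~~ P p.1) D p + \sum_(p | ~~ P p.2) D p.
  rewrite big_mkcond [X in _ <= X + _]big_mkcond [X in _ <= _ + X]big_mkcond -big_split /=.
  apply: ler_sum => p _.
  by case: (P p.1); case: (P p.2); rewrite /= ?addr0 ?add0r ?lerDl ?D0.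
have total : \sum_(p | P p.1 && P p.2) D p + \sum_(p | ~~ (P p.1 && P p.2)) D p = 1.
  by rewrite -D1 [RHS](bigID (fun p => P p.1 && P p.2)).
move: total bad_le; rewrite mass1 mass2; lra.
Qed.

End Probabilities.

Theorem mainTheorem18 :
  exists (C k : nat), (0 < C)%N /\ (0 < k)%N /\
  forall (F : finFieldType) (R : realFieldType) (D : {'GL_2[F]} * {'GL_2[F]} -> R),
    is_distr D -> marginals_uniform D ->
    (\sum_(p : {'GL_2[F]} * {'GL_2[F]} | [forall x in SL2 F,
                  probC R p.1 p.2 (x ^: SL2 F)%g <= C%:R / #|F|%:R]
               && (sdist_unif R p.1 p.2 ^+ k <= C%:R ^+ k / #|F|%:R))
       D p >= 1 - C%:R / #|F|%:R)%R.
Proof.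
exists 100%N, 1%N; split => //; split => // F R D Dd Dm.
apply: le_trans (_ : 1 - 2 * (#|[set x in SL2 F | ~~ regular x]|%:R / #|SL2 F|%:R) <= _).
  by rewrite lerD2l lerN2 nonregular_mass_le.
apply: le_trans (mass_good_pairs_ge (@regular F) Dd Dm) _.
apply: ler_sum_subpred; first by case: Dd.
move=> [g h] /andP [gr hr] /=; apply/andP; split.
  by apply/forall_inP => x _; exact: probC_le.
by rewrite !expr1; exact: sdist_unif_le.
Qed.
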